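(* For every $n\ge 1$, there is a one-to-one correspondence between the set of relative derangements of type $B$ on $[n]$ and the set of signed skew derangements on $[n]$.
   Context: A signed permutation on $[n]=\{1,\dots,n\}$ is a word $\pi_1\cdots\pi_n$ which is an ordinary permutation of $[n]$ in which some entries carry a bar. A relative derangement of type $B$ on $[n]$ is a signed permutation $\pi_1\cdots\pi_n$ such that for every $1\le i\le n-1$, the entry $i$ is not immediately followed by $i+1$, and $\bar i$ is not immediately followed by $\overline{i+1}$. A signed set on $[n]$ is the set $[n]$ with some of its elements barred. For a signed set $X$ on $[n]$, $X-1$ denotes the set obtained by subtracting $1$ from each element, with the rule $\bar i-1=\overline{i-1}$ (so $X-1$ is a signed set on $\{0,1,\dots,n-1\}$, possibly containing $\bar 0$). A signed skew derangement on $[n]$ is a pair consisting of a signed set $X$ on $[n]$ and a bijection $f:X\to X-1$ such that $f(x)\neq x$ for all $x\in X$ (equality as signed elements). *)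

From mathcomp Require Import all_boot all_order.
From mathcomp Require Import all_fingroup.
Set Implicit Arguments.
Unset Strict Implicit.
Unset Printing Implicit Defensive.

(* Signed elements are encoded as pairs (m, barred?) : nat * bool. *)

(* We encode it as a pair (s, b) with s : {perm 'I_n} and b : {ffun 'I_n -> bool}:
   the entry at (0-based) position j is the value (s j).+1 in [n], barred iff b j. *)
Definition signed_perm (n : nat) : finType :=
  ({perm 'I_n} * {ffun 'I_n -> bool})%type.

Definition sp_entry n (w : signed_perm n) (j : 'I_n) : nat * bool :=
  ((w.1 j).+1, w.2 j).

Definition rel_derangement_B n (w : signed_perm n) : bool :=
  [forall i : 'I_n, (0 < val i) ==>
   [forall j : 'I_n, forall k : 'I_n, (val k == (val j).+1) ==>
      ~~ ((sp_entry w j == (val i, false)) && (sp_entry w k == ((val i).+1, false)))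
   && ~~ ((sp_entry w j == (val i, true)) && (sp_entry w k == ((val i).+1, true)))]].

Definition RelDerB (n : nat) := {w : signed_perm n | rel_derangement_B w}.

(* A signed set X on [n] is encoded by X : {ffun 'I_n -> bool}: the index k
   stands for the element k+1 of [n], barred iff X k.
   The elements of X, as signed elements: *)
Definition sset_elem n (X : {ffun 'I_n -> bool}) (k : 'I_n) : nat * bool :=
  ((val k).+1, X k).
(* The elements of X - 1 (a signed set on {0,..,n-1}): index k stands for
   (k+1) - 1 = k, with the same bar as k+1 in X. *)
Definition sset_elem_m1 n (X : {ffun 'I_n -> bool}) (k : 'I_n) : nat * bool :=
  (val k, X k).

(* A signed skew derangement: a signed set X and a bijection f : X -> X - 1,
   encoded (through the index bijections above) by a permutation p of 'I_n,
   f (sset_elem X k) = sset_elem_m1 X (p k), such that f x <> x as signed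
   elements. *)
Definition signed_skew_pair (n : nat) : finType :=
  ({ffun 'I_n -> bool} * {perm 'I_n})%type.

Definition signed_skew_derangement n (d : signed_skew_pair n) : bool :=
  [forall k : 'I_n, sset_elem_m1 d.1 (d.2 k) != sset_elem d.1 k].

Definition SignedSkewDer (n : nat) := {d : signed_skew_pair n | signed_skew_derangement d}.

From mathcomp Require Import all_boot all_order all_fingroup.
From mathcomp Require Import zify.
Set Implicit Arguments.
Unset Strict Implicit.
Unset Printing Implicit Defensive.

(* Send a signed word w = (s, bars) to the signed set X carrying the bar of
   each value and to the permutation [foata s] given by Foata's fundamental
   transformation.  The image of the value s j is s (j+1) unless j+1 starts a
   new cycle, in which case it is smaller than s j; so it equals s j + 1 exactly
   when s j + 1 immediately follows s j in the word.  Hence a fixed point of the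
   skew map at s j + 1 is precisely a forbidden factor i (i+1) or bar i
   bar (i+1).  Foata's transformation is injective, so this is a bijection of
   all signed words onto all pairs (X, p), and it restricts to the two
   subsets. *)

Section FoataTransform.

Variable n : nat.
Implicit Types (s t : {perm 'I_n.+1}) (i j k : 'I_n.+1).

Definition ord_succ j : 'I_n.+1 := inord j.+1.

Lemma ord_succE j : j < n -> ord_succ j = j.+1 :> nat.
Proof. by move=> jn; rewrite inordK. Qed.

Definition prefix_argmin s j : 'I_n.+1 := [arg min_(k < j | k <= j) s k].

Lemma prefix_argmin_le s j : prefix_argmin s j <= j.
Proof. by rewrite /prefix_argmin; case: arg_minnP. Qed.

Lemma prefix_argmin_min s j k : k <= j -> s (prefix_argmin s j) <= s k.
Proof. by rewrite /prefix_argmin; case: arg_minnP => // i _ min_i /min_i. Qed.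

(* Cut the word s before each left-to-right minimum and read the blocks as
   cycles: [foata_succ s j] is the image of [s j]. *)
Definition foata_succ s j : 'I_n.+1 :=
  if (j < n) && (s (prefix_argmin s j) < s (ord_succ j)) then s (ord_succ j)
  else s (prefix_argmin s j).

Lemma foata_succ_neq s j j' : j < j' -> foata_succ s j != foata_succ s j'.
Proof.
move=> lt_jj'; have jn : j < n by rewrite (leq_trans lt_jj') // -ltnS.
have sjS_le : ord_succ j <= j' by rewrite ord_succE.
have m_le := prefix_argmin_le s j.
rewrite /foata_succ jn /=; apply/eqP.
case: ifP => [lt_m | /negbT ge_m]; case: ifP => [/andP[jn' _] | _] /perm_inj E.
- by move/(congr1 val): E; rewrite /= !ord_succE //; lia.
- move: lt_m; rewrite E ltnNge prefix_argmin_min //.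
  by rewrite (leq_trans m_le) // ltnW.
- by move: m_le; rewrite E ord_succE //; lia.
- have le_m : s (prefix_argmin s j') <= s (ord_succ j) by exact: prefix_argmin_min.
  move: ge_m; rewrite -leqNgt => ge_m.
  have /perm_inj Es : s (ord_succ j) = s (prefix_argmin s j).
    by apply/val_inj/eqP; rewrite eqn_leq ge_m E le_m.
  by move: m_le; rewrite -Es ord_succE // ltnn.
Qed.

Lemma foata_succ_inj s : injective (foata_succ s).
Proof.
move=> j j' E; case: (ltngtP j j') => [lt | gt | /val_inj //].
- by move: (foata_succ_neq s lt); rewrite E eqxx.
- by move: (foata_succ_neq s gt); rewrite E eqxx.
Qed.

Definition foata s : {perm 'I_n.+1} :=
  perm (inj_comp (@foata_succ_inj s) (@perm_inj _ s^-1)%g).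

Lemma foataE s j : foata s (s j) = foata_succ s j.
Proof. by rewrite permE /= permK. Qed.

Lemma foata_succS s j :
  j < n -> val (s (ord_succ j)) = (s j).+1 -> foata_succ s j = s (ord_succ j).
Proof.
by move=> jn sjS; rewrite /foata_succ jn sjS /= ltnS prefix_argmin_min.
Qed.

Lemma foata_succ_eq_succ s j :
  val (foata_succ s j) = (s j).+1 -> j < n /\ val (s (ord_succ j)) = (s j).+1.
Proof.
rewrite /foata_succ; case: ifP => [/andP[jn _] -> // | _ E].
by have := prefix_argmin_min s (leqnn j); rewrite E ltnn.
Qed.

Lemma perm_prefix_stable s t j k :
  (forall i, j < i -> s i = t i) -> k <= j -> (t^-1)%g (s k) <= j.
Proof.
move=> st kj; rewrite leqNgt; apply/negP => ji.
have /perm_inj E : s ((t^-1)%g (s k)) = s k by rewrite st // permKV.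
by move: ji; rewrite E ltnNge kj.
Qed.

Lemma foata_succ_suffix s t j :
  (forall i, j < i -> s i = t i) -> foata_succ s j = foata_succ t j.
Proof.
move=> st; have ts i : j < i -> t i = s i by move/st.
have Em : s (prefix_argmin s j) = t (prefix_argmin t j).
  apply/val_inj/eqP; rewrite eqn_leq.
  have := prefix_argmin_min s (perm_prefix_stable ts (prefix_argmin_le t j)).
  have := prefix_argmin_min t (perm_prefix_stable st (prefix_argmin_le s j)).
  by rewrite !permKV => -> ->.
rewrite /foata_succ Em; case jn: (j < n) => //=.
by rewrite st // ord_succE.
Qed.

(* Positions are recovered from right to left, since [foata_succ s j] only
   depends on [s] at positions [k >= j]. *)
Lemma foata_inj : injective foata.
Proof.
move=> s t Est.
suff agree d j : n.+1 - d <= j -> s j = t j.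
  by apply/permP => j; apply: (agree n.+1); rewrite subnn.
elim: d j => [|d IH] j le_j; first by move: (ltn_ord j); lia.
case: (leqP (n.+1 - d) j) => [/IH // | lt_j].
have st i : j < i -> s i = t i by move=> ji; apply: IH; lia.
have := foata_succ_suffix st.
by rewrite -!foataE Est => /perm_inj.
Qed.

End FoataTransform.

Lemma rel_derangement_BP n (w : signed_perm n) :
  reflect (forall j k : 'I_n, k = j.+1 :> nat -> w.1 k = (w.1 j).+1 :> nat -> w.2 j != w.2 k)
          (rel_derangement_B w).
Proof.
apply: (iffP forallP) => [rdB j k kE skE | adj i].
  move: (rdB (w.1 k)) => /=; rewrite skE /= => /forallP/(_ j)/forallP/(_ k).
  rewrite kE eqxx /= /sp_entry !xpair_eqE skE !eqxx /=.
  by case: (w.2 j); case: (w.2 k).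
apply/implyP => _; apply/forallP => j; apply/forallP => k; apply/implyP => /eqP kE.
rewrite /sp_entry !xpair_eqE -!andbA.
apply/andP; split; apply/negP => /and4P[/eqP sj /eqP bj /eqP sk /eqP bk];
  by apply: (negP (adj j k kE _)); [lia | rewrite bj bk].
Qed.

Definition skew_of_signed n (w : signed_perm n.+1) : signed_skew_pair n.+1 :=
  ([ffun v => w.2 ((w.1^-1)%g v)], foata w.1).

Lemma skew_of_signed_fixed n (w : signed_perm n.+1) j :
  (sset_elem_m1 (skew_of_signed w).1 ((skew_of_signed w).2 (w.1 j))
     == sset_elem (skew_of_signed w).1 (w.1 j))
  = [&& j < n, val (w.1 (ord_succ j)) == (w.1 j).+1 & w.2 j == w.2 (ord_succ j)].
Proof.
case: w => s b /=; rewrite /sset_elem_m1 /sset_elem xpair_eqE /= foataE !ffunE permK.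
case: (boolP (foata_succ s j == (s j).+1 :> nat)) => [/eqP fS | fS] /=.
  have [jn sjS] := foata_succ_eq_succ fS.
  by rewrite jn sjS eqxx (foata_succS jn sjS) /= permK eq_sym.
apply/esym/negbTE; move: fS; apply: contra => /and3P[jn /eqP sjS _].
by rewrite (foata_succS jn sjS) sjS.
Qed.

Lemma rel_derangement_B_skew n (w : signed_perm n.+1) :
  rel_derangement_B w = signed_skew_derangement (skew_of_signed w).
Proof.
apply/rel_derangement_BP/forallP => [adj v | nofix j k kE skE].
  rewrite -(permKV w.1 v) skew_of_signed_fixed.
  apply/and3P => -[jn /eqP sjS /eqP bE].
  by move: (adj _ _ (ord_succE jn) sjS); rewrite bE eqxx.
have jn : j < n by rewrite -ltnS -kE.
have kS : k = ord_succ j by apply: val_inj; rewrite /= ord_succE.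
by move: (nofix (w.1 j)); rewrite skew_of_signed_fixed -kS jn /= skE eqxx.
Qed.

Lemma skew_of_signed_inj n : injective (@skew_of_signed n).
Proof.
move=> [s b] [t c] [EX /foata_inj Est]; subst t; congr (_, _).
apply/ffunP => j; move/ffunP/(_ (s j)): EX.
by rewrite !ffunE permK.
Qed.

Lemma skew_of_signed_bij n : bijective (@skew_of_signed n).
Proof.
apply: inj_card_bij; first exact: skew_of_signed_inj.
by rewrite !card_prod mulnC.
Qed.

Lemma sig_bij (T U : Type) (P : pred T) (Q : pred U) (f : T -> U) :
  bijective f -> (forall x, P x = Q (f x)) ->
  exists g : {x | P x} -> {y | Q y}, bijective g.
Proof.
move=> [f' fK f'K] PQ.
have Qf x : P x -> Q (f x) by rewrite PQ.
have Pf' y : Q y -> P (f' y) by rewrite PQ f'K.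
exists (fun x => exist _ (f (val x)) (Qf _ (valP x))).
exists (fun y => exist _ (f' (val y)) (Pf' _ (valP y))).
  by move=> x; apply: val_inj; rewrite /= fK.
by move=> y; apply: val_inj; rewrite /= f'K.
Qed.

Theorem theorem2 (n : nat) : 1 <= n ->
  exists f : RelDerB n -> SignedSkewDer n, bijective f.
Proof.
case: n => [//|n] _.
exact: sig_bij (@skew_of_signed_bij n) (@rel_derangement_B_skew n).
Qed.
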